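(* For any $n\geq 1$, $b\geq 2$ and even, $R_n(b)$ listed in co-Reflected Gray Code Order is a $3$-adjacent Gray code.
   Context: A restricted growth function of length $n$ is an integer sequence $s_1s_2\ldots s_n$ with $s_1=0$ and $0\leq s_{i+1}\leq \max\{s_j\}_{j=1}^i+1$ for $1\leq i\leq n-1$; $R_n$ is the set of these, and for $b\geq1$, $R_n(b)=\{s_1\ldots s_n\in R_n : \max\{s_i\}_{i=1}^n\leq b\}$. The co-Reflected Gray Code Order on $\{0,1,\ldots,m-1\}^n$ ($m\geq2$) is defined by: $s_1\ldots s_n$ is less than $t_1\ldots t_n$ if, for the position $k$ with $s_i=t_i$ ($1\leq i\leq k-1$) and $s_k\neq t_k$, either $U_k$ is even and $s_k<t_k$, or $U_k$ is odd and $s_k>t_k$, where $U_k=|\{i\in\{1,\ldots,k-1\}: s_i\neq0,\ s_i \text{ even}\}|$. A list of same-length sequences is a $d$-adjacent Gray code if successive sequences differ in at most $d$ positions and these positions are adjacent. *)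

From mathcomp Require Import all_boot.
Set Implicit Arguments. Unset Strict Implicit. Unset Printing Implicit Defensive.

(* Sequences s_1 ... s_n are represented as [seq nat] (index i-1 = s_i). *)

Fixpoint rgf_aux (m : nat) (s : seq nat) : bool :=
  match s with
  | [::] => true
  | x :: s' => (x <= m.+1) && rgf_aux (maxn m x) s'
  end.

Definition is_rgf (s : seq nat) : bool :=
  match s with
  | [::] => true
  | x :: s' => (x == 0) && rgf_aux 0 s'
  end.

Definition in_Rnb (n b : nat) (s : seq nat) : bool :=
  [&& size s == n, is_rgf s & all (fun x => x <= b) s].

Fixpoint all_words (m n : nat) : seq (seq nat) :=
  match n with
  | 0 => [:: [::]]
  | n'.+1 => [seq x :: w | x <- iota 0 m, w <- all_words m n']
  end.

Definition Rnb (n b : nat) : seq (seq nat) :=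
  [seq s <- all_words b.+1 n | in_Rnb n b s].

(* co-Reflected Gray Code order: u = U_k, number of earlier nonzero even entries *)
Fixpoint colt_aux (u : nat) (s t : seq nat) : bool :=
  match s, t with
  | x :: s', y :: t' =>
      if x == y then colt_aux (u + ((x != 0) && ~~ odd x)) s' t'
      else if ~~ odd u then x < y else y < x
  | _, _ => false
  end.

Definition colt (s t : seq nat) : bool := colt_aux 0 s t.
Definition cole (s t : seq nat) : bool := (s == t) || colt s t.

Definition coRGC_list (n b : nat) : seq (seq nat) := sort cole (Rnb n b).

Definition diff_pos (s t : seq nat) : seq nat :=
  [seq i <- iota 0 (maxn (size s) (size t)) | nth 0 s i != nth 0 t i].

Definition d_adjacent_step (d : nat) (s t : seq nat) : bool :=
  let D := diff_pos s t in (size D <= d) && (D == iota (head 0 D) (size D)).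

Definition d_adjacent_gray (d : nat) (L : seq (seq nat)) : Prop :=
  forall i, i.+1 < size L -> d_adjacent_step d (nth [::] L i) (nth [::] L i.+1).

From mathcomp Require Import all_boot zify.
Set Implicit Arguments. Unset Strict Implicit. Unset Printing Implicit Defensive.

(* A word of R_n(b) is built letter by letter: after a prefix with
   running maximum m containing u nonzero even letters, the next letter
   ranges over 0..min(m+1, b), upwards if u is even and downwards if u is odd,
   and the suffixes following each letter are listed in the same manner.  So
   the co-RGC listing is a concatenation of blocks, one per letter, and the
   Gray property needs to be checked only at the junction of two blocks.
   Changing the parity of u reverses a listing, so the two words meeting at a
   junction are y F and (y+1) F', where F and F' are first words of
   sub-listings.  A first word is 0...0 when its count is even, and otherwise
   t 0...0 or t (t+1) 0...0 with t = min(m+1, b), the second form when t is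
   odd, hence t < b as b is even.  Thus the two words differ exactly on an
   initial segment of length at most 3. *)

Lemma colt_aux_irr u s : colt_aux u s s = false.
Proof. by elim: s u => [|x s IH] u //=; rewrite eqxx IH. Qed.

Lemma colt_aux_asym u s t : colt_aux u s t -> colt_aux u t s -> False.
Proof.
elim: s u t => [|x s IH] u [|y t] //=.
rewrite eq_sym; case: eqP => [->|_]; first exact: IH.
by case: (odd u) => /=; lia.
Qed.

Lemma colt_aux_trans u : transitive (colt_aux u).
Proof.
move=> t s r; elim: s u t r => [|x s IH] u [|y t] [|z r] //=.
case: (eqVneq x y) => [<-|nxy]; first by case: ifP => // _; exact: IH.
case: (eqVneq y z) => [<-|nyz]; first by rewrite (negbTE nxy).
case: (eqVneq x z) => [<-|_]; case: (odd u) => /=; lia.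
Qed.

Lemma colt_aux_total u s t :
  size s = size t -> s != t -> colt_aux u s t || colt_aux u t s.
Proof.
elim: s u t => [|x s IH] u [|y t] //= [] size_st.
rewrite eqseq_cons eq_sym; case: (eqVneq y x) => [->|nyx] /=; first exact: IH.
by case: (odd u) => /=; lia.
Qed.

Lemma cole_trans : transitive cole.
Proof.
move=> t s r /orP[/eqP->//|lt_st] /orP[/eqP<-|lt_tr]; apply/orP; right => //.
exact: colt_aux_trans lt_tr.
Qed.

Lemma cole_anti : antisymmetric cole.
Proof.
move=> s t /andP[/orP[/eqP->//|lt_st] /orP[/eqP->//|lt_ts]].
by case: (colt_aux_asym lt_st lt_ts).
Qed.

Definition nz_even (x : nat) : bool := (x != 0) && ~~ odd x.

Definition max_entry (b m : nat) : nat := minn m.+1 b.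

Definition entries (b m u : nat) : seq nat :=
  if odd u then rev (iota 0 (max_entry b m).+1) else iota 0 (max_entry b m).+1.

Fixpoint coRGC_tails (b m u k : nat) : seq (seq nat) :=
  if k is k'.+1 then
    flatten [seq map (cons x) (coRGC_tails b (maxn m x) (u + nz_even x) k')
            | x <- entries b m u]
  else [:: [::]].

Lemma entries_neq0 b m u : entries b m u != [::].
Proof. by rewrite /entries -size_eq0; case: odd; rewrite ?size_rev size_iota. Qed.

Lemma entriesS b m u : entries b m u.+1 = rev (entries b m u).
Proof. by rewrite /entries oddS; case: odd; rewrite ?revK. Qed.

Lemma head_entries b m u : head 0 (entries b m u) = if odd u then max_entry b m else 0.
Proof. by rewrite /entries; case: odd; rewrite // -addn1 iotaD rev_cat. Qed.

Lemma mem_entries b m u x : (x \in entries b m u) = (x <= max_entry b m).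
Proof. by rewrite /entries; case: odd; rewrite ?mem_rev mem_iota ltnS. Qed.

Lemma sorted_iota0 (R : rel nat) n :
  (forall i, i.+1 < n -> R i i.+1) -> sorted R (iota 0 n).
Proof.
move=> R_succ; apply/(sortedP 0) => i; rewrite size_iota => lt_in.
by rewrite !nth_iota ?(ltnW lt_in) // !add0n; exact: R_succ.
Qed.

Lemma sorted_entries (R : rel nat) b m u :
  (forall y, y < max_entry b m -> if odd u then R y.+1 y else R y y.+1) ->
  sorted R (entries b m u).
Proof.
move=> R_succ; rewrite /entries; case: (odd u) R_succ => R_succ.
  by rewrite rev_sorted; apply: sorted_iota0 => i; rewrite ltnS; exact: R_succ.
by apply: sorted_iota0 => i; rewrite ltnS; exact: R_succ.
Qed.

Lemma coRGC_tails_neq0 b m u k : coRGC_tails b m u k != [::].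
Proof.
elim: k m u => [|k IH] m u //=.
case: (entries b m u) (entries_neq0 b m u) => [|x xs] //= _.
by case: (coRGC_tails _ _ _ k) (IH (maxn m x) (u + nz_even x)).
Qed.

Lemma coRGC_tailsS b m u k : coRGC_tails b m u.+1 k = rev (coRGC_tails b m u k).
Proof.
elim: k m u => [|k IH] m u //=.
rewrite entriesS rev_flatten map_rev -map_comp; congr (flatten (rev _)).
by apply: eq_map => x /=; rewrite addSn IH map_rev.
Qed.

Lemma last_coRGC_tails b m u k :
  last [::] (coRGC_tails b m u k) = head [::] (coRGC_tails b m u.+1 k).
Proof.
rewrite coRGC_tailsS.
by case/lastP: (coRGC_tails b m u k) => // G w; rewrite rev_rcons last_rcons.
Qed.

Lemma head_coRGC_tails_cons b m u k (x := head 0 (entries b m u)) :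
  head [::] (coRGC_tails b m u k.+1) =
  x :: head [::] (coRGC_tails b (maxn m x) (u + nz_even x) k).
Proof.
rewrite {}/x /=; case: (entries b m u) (entries_neq0 b m u) => [|x xs] //= _.
by case: (coRGC_tails _ _ _ k) (coRGC_tails_neq0 b (maxn m x) (u + nz_even x) k).
Qed.

Lemma mem_flatten_map_cons (T : eqType) (B : T -> seq (seq T)) l w :
  (w \in flatten [seq map (cons x) (B x) | x <- l]) =
  if w is a :: w' then (a \in l) && (w' \in B a) else false.
Proof.
apply/flatten_mapP/idP => [[x l_x /mapP[w' Bw' ->]]|]; first by rewrite l_x.
by case: w => // a w' /andP[l_a Bw']; exists a => //; apply: map_f.
Qed.

Lemma mem_coRGC_tails b m u k w : m <= b ->
  (w \in coRGC_tails b m u k) = [&& size w == k, rgf_aux m w & all (fun x => x <= b) w].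
Proof.
elim: k m u w => [|k IH] m u [|a w] le_mb //=; rewrite mem_flatten_map_cons //.
rewrite mem_entries leq_min eqSS.
have [le_ab|] := leqP a b; last by rewrite !andbF.
rewrite IH ?geq_max ?le_mb //.
by case: (a <= m.+1); case: (size w == k); rewrite ?andbF.
Qed.

Lemma mem_all_words M k w :
  (w \in all_words M k) = (size w == k) && all (fun x => x < M) w.
Proof.
elim: k w => [|k IH] [|a w] //; first by apply/negbTE/allpairsP => -[[? ?] []].
apply/allpairsP/idP => [[[a' w'] /= [+ + [-> ->]]]|].
  by rewrite mem_iota IH /= eqSS => -> /andP[-> ->].
rewrite /= eqSS => /and3P[size_w lt_aM all_w].
by exists (a, w); rewrite /= mem_iota add0n IH size_w lt_aM all_w.
Qed.

Lemma all_words_uniq M k : uniq (all_words M k).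
Proof.
elim: k => [|k IH] //=.
by apply: allpairs_uniq => [||[a w] [a' w'] _ _ [-> ->]] //; exact: iota_uniq.
Qed.

Lemma mem_Rnb n b w : (w \in Rnb n b) = in_Rnb n b w.
Proof.
rewrite mem_filter andb_idr // => /and3P[size_w _ all_w].
by rewrite mem_all_words size_w.
Qed.

Lemma cons_inj (T : Type) (x : T) : injective (cons x).
Proof. by move=> s t []. Qed.

Lemma mem_Rnb_coRGC_tails n b : Rnb n.+1 b =i map (cons 0) (coRGC_tails b 0 0 n).
Proof.
case=> [|[|x] w]; rewrite mem_Rnb.
- by apply/esym/mapP => -[].
- by rewrite (mem_map (@cons_inj _ 0)) mem_coRGC_tails // /in_Rnb /= eqSS.
- by rewrite /in_Rnb /= andbF; apply/esym/mapP => -[].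
Qed.

Lemma sorted_flatten_map (T U : Type) (r : rel U) (y0 : U) (B : T -> seq U) l :
  (forall x, B x <> [::]) -> (forall x, sorted r (B x)) ->
  sorted (fun x x' => r (last y0 (B x)) (head y0 (B x'))) l ->
  sorted r (flatten (map B l)).
Proof.
move=> B_neq0 B_sorted; elim: l => [|x l IH] //= path_xl.
have {IH} := IH (path_sorted path_xl).
case: l path_xl => [|x' l] /=; first by rewrite cats0.
case/andP => r_xx' _.
case: (B x) (B_neq0 x) (B_sorted x) r_xx' => // w s _ /= path_ws r_ww'.
rewrite cat_path path_ws /=.
by case: (B x') (B_neq0 x') r_ww' => // w' s' _ /= -> ->.
Qed.

Lemma head_coRGC_block x b m u k :
  head [::] (map (cons x) (coRGC_tails b m u k)) = x :: head [::] (coRGC_tails b m u k).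
Proof. by case: (coRGC_tails b m u k) (coRGC_tails_neq0 b m u k). Qed.

Lemma last_coRGC_block x b m u k :
  last [::] (map (cons x) (coRGC_tails b m u k)) = x :: head [::] (coRGC_tails b m u.+1 k).
Proof.
rewrite -last_coRGC_tails.
by case: (coRGC_tails b m u k) (coRGC_tails_neq0 b m u k) => // w G _; rewrite /= last_map.
Qed.

Lemma map_cons_coRGC_tails_neq0 b m u k x : map (cons x) (coRGC_tails b m u k) != [::].
Proof. by rewrite -size_eq0 size_map size_eq0 coRGC_tails_neq0. Qed.

Lemma sorted_coRGC_tails_colt b m u k : sorted (colt_aux u) (coRGC_tails b m u k).
Proof.
elim: k m u => [|k IH] m u //=.
apply: (@sorted_flatten_map _ _ _ [::]) => [x|x|]; first exact/eqP/map_cons_coRGC_tails_neq0.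
  by rewrite sorted_map; apply: sub_sorted (IH _ _) => s t /=; rewrite eqxx.
apply: sorted_entries => y _.
have [ne_y ne_y'] := (ltn_eqF (ltnSn y), gtn_eqF (ltnSn y)).
by case odd_u: (odd u); rewrite /= last_coRGC_block head_coRGC_block /= odd_u ?ne_y ?ne_y' /=.
Qed.

Lemma coRGC_list_tails n b : coRGC_list n.+1 b = map (cons 0) (coRGC_tails b 0 0 n).
Proof.
have sorted_tails := sorted_coRGC_tails_colt b 0 0 n.
apply: (sorted_eq cole_trans cole_anti).
- apply: (@sort_sorted_in _ (fun s => size s == n.+1)); last first.
    by apply/allP => s; rewrite mem_Rnb => /and3P[].
  move=> s t /eqP size_s /eqP size_t; rewrite /cole.
  case: (eqVneq s t) => [//|neq_st].
  by apply: colt_aux_total; rewrite ?size_s ?size_t.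
- rewrite sorted_map; apply: sub_sorted sorted_tails => s t lt_st.
  by rewrite /cole /colt /= lt_st orbT.
- rewrite perm_sort; apply: uniq_perm (mem_Rnb_coRGC_tails n b).
    by rewrite filter_uniq // all_words_uniq.
  rewrite (map_inj_uniq (@cons_inj _ 0)).
  by apply: sorted_uniq sorted_tails => [|s]; [apply: colt_aux_trans | rewrite colt_aux_irr].
Qed.

Fixpoint differ_initial (d : nat) (s t : seq nat) : bool :=
  match s, t with
  | x :: s', y :: t' => if x == y then s' == t' else (0 < d) && differ_initial d.-1 s' t'
  | [::], [::] => true
  | _, _ => false
  end.

Fixpoint differ_segment (d : nat) (s t : seq nat) : bool :=
  match s, t with
  | x :: s', y :: t' => if x == y then differ_segment d s' t' else differ_initial d s t
  | [::], [::] => true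
  | _, _ => false
  end.

Lemma differ_initial_refl d s : differ_initial d s s.
Proof. by case: s => //= x s; rewrite !eqxx. Qed.

Lemma differ_initial_sym d s t : differ_initial d s t = differ_initial d t s.
Proof.
elim: s d t => [|x s IH] d [|y t] //=.
by rewrite eq_sym IH [s == t]eq_sym.
Qed.

Lemma differ_segment_sym d s t : differ_segment d s t = differ_segment d t s.
Proof.
elim: s t => [|x s IH] [|y t] //=.
by case: (eqVneq x y) => _; rewrite ?IH // differ_initial_sym.
Qed.

Lemma diff_pos_cons x y s t :
  diff_pos (x :: s) (y :: t) = (if x != y then [:: 0] else [::]) ++ map S (diff_pos s t).
Proof.
rewrite /diff_pos /= maxnSS /= (iotaDl 1 0) filter_map.
by case: (x != y).
Qed.

Lemma map_succ_iota j c : map S (iota j c) = iota j.+1 c.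
Proof. by rewrite (iotaDl 1). Qed.

Lemma diff_pos_refl s : diff_pos s s = [::].
Proof. by elim: s => // x s IH; rewrite diff_pos_cons eqxx IH. Qed.

Lemma differ_initial_diff_pos d s t :
  differ_initial d s t -> exists2 c, c <= d & diff_pos s t = iota 0 c.
Proof.
elim: s d t => [|x s IH] d [|y t] //=; first by exists 0.
rewrite diff_pos_cons; case: (eqVneq x y) => [_ /eqP <-|_ /andP[d_gt0 /IH[c le_c ->]]].
  by exists 0; rewrite // diff_pos_refl.
by exists c.+1; [lia | rewrite map_succ_iota].
Qed.

Lemma differ_segment_diff_pos d s t :
  differ_segment d s t -> exists j c, c <= d /\ diff_pos s t = iota j c.
Proof.
elim: s t => [|x s IH] [|y t] //=; first by exists 0, 0.
rewrite diff_pos_cons; case: (eqVneq x y) => [_ /IH[j [c [le_c ->]]]|_].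
  by exists j.+1, c; rewrite map_succ_iota.
case/andP=> d_gt0 /differ_initial_diff_pos[c le_c ->].
by exists 0, c.+1; split; [lia | rewrite map_succ_iota].
Qed.

Lemma differ_segment_adjacent d s t : differ_segment d s t -> d_adjacent_step d s t.
Proof.
rewrite /d_adjacent_step => /differ_segment_diff_pos[j [c [le_c ->]]].
by rewrite size_iota le_c; case: c {le_c} => /=; rewrite ?eqxx.
Qed.

Fixpoint zero_pad (k : nat) (P : seq nat) : seq nat :=
  if k is k'.+1 then head 0 P :: zero_pad k' (behead P) else [::].

Fixpoint apart (P Q : seq nat) : bool :=
  match P, Q with
  | x :: P', y :: Q' => (x != y) && apart P' Q'
  | _, _ => true
  end.

Lemma apart0 P : apart P [::].
Proof. by case: P. Qed.

Lemma differ_initial_zero_pad d k (P Q : seq nat) :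
  all (fun x => x != 0) (P ++ Q) -> apart P Q -> maxn (size P) (size Q) <= d ->
  differ_initial d (zero_pad k P) (zero_pad k Q).
Proof.
elim: k d P Q => [|k IH] d [|x P] [|y Q] //=.
- case/andP=> y_nz nz_Q _ le_Qd; rewrite eq_sym (negbTE y_nz).
  by apply/andP; split; [lia | apply: IH => //=; lia].
- rewrite cats0 => /andP[x_nz nz_P] _ le_Pd; rewrite (negbTE x_nz).
  by apply/andP; split; [lia | apply: IH; rewrite ?cats0 ?apart0 //=; lia].
- case/andP=> _; rewrite all_cat => /and3P[nz_P _ nz_Q] /andP[ne_xy apart_PQ] le_d.
  rewrite (negbTE ne_xy); apply/andP; split; first lia.
  by apply: IH; rewrite ?all_cat ?nz_P //; lia.
Qed.

Definition lead_entries (t : nat) : seq nat := if odd t then [:: t; t.+1] else [:: t].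

Lemma differ_initial_lead k (p q : bool) t t' : t != 0 -> t' \in [:: t; t.+1] ->
  differ_initial 2 (zero_pad k (if p then lead_entries t else [::]))
                   (zero_pad k (if q then lead_entries t' else [::])).
Proof.
move=> t_nz t'_near.
have nz_lead t0 : t0 != 0 -> all (fun x => x != 0) (lead_entries t0).
  by rewrite /lead_entries; case: odd => /= ->.
have size_lead t0 : size (lead_entries t0) <= 2 by rewrite /lead_entries; case: odd.
have t'_nz : t' != 0 by move: t'_near; rewrite !inE; lia.
case: p; case: q; rewrite ?differ_initial_refl //.
- move: t'_near; rewrite !inE => /orP[/eqP-> | /eqP->]; first exact: differ_initial_refl.
  apply: differ_initial_zero_pad; first by rewrite all_cat !nz_lead.
    by rewrite /lead_entries oddS; case: odd => /=; rewrite andbT neq_ltn ltnSn.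
  by rewrite geq_max !size_lead.
- by apply: differ_initial_zero_pad; rewrite ?cats0 ?nz_lead ?apart0 // maxn0 size_lead.
- by apply: differ_initial_zero_pad; rewrite ?nz_lead // max0n size_lead.
Qed.

Lemma head_coRGC_tails_even b m u k :
  ~~ odd u -> head [::] (coRGC_tails b m u k) = zero_pad k [::].
Proof.
elim: k m u => [|k IH] m u even_u //.
by rewrite head_coRGC_tails_cons head_entries (negbTE even_u) /= maxn0 addn0 IH.
Qed.

Section Junctions.

Variable b : nat.
Hypotheses (b_ge2 : 2 <= b) (b_even : ~~ odd b).

Lemma head_coRGC_tails m u k :
  head [::] (coRGC_tails b m u k) =
  zero_pad k (if odd u then lead_entries (max_entry b m) else [::]).
Proof.
case odd_u: (odd u); last by rewrite head_coRGC_tails_even ?odd_u.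
case: k => [|k] //; rewrite head_coRGC_tails_cons head_entries odd_u /lead_entries.
set t := max_entry b m.
have t_nz : t != 0 by rewrite /t /max_entry; lia.
case odd_t: (odd t) => /=; last first.
  by rewrite /nz_even t_nz odd_t addn1 head_coRGC_tails_even //= odd_u.
have t_lt_b : t < b.
  by rewrite ltn_neqAle /t /max_entry geq_minr andbT; apply: contraNneq b_even => <-.
have max_mt : maxn m t = t by rewrite /t /max_entry in t_lt_b *; lia.
rewrite /nz_even odd_t andbF addn0 max_mt.
case: k => [|k] //; rewrite head_coRGC_tails_cons head_entries odd_u.
have -> : max_entry b t = t.+1 by rewrite /max_entry; lia.
by rewrite /nz_even /= odd_t addn1 head_coRGC_tails_even //= odd_u.
Qed.

Lemma coRGC_junction m y pa pb k : y < max_entry b m ->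
  differ_segment 3 (y :: head [::] (coRGC_tails b (maxn m y) pa k))
                   (y.+1 :: head [::] (coRGC_tails b (maxn m y.+1) pb k)).
Proof.
move=> lt_y; rewrite /= ltn_eqF // !head_coRGC_tails.
apply: differ_initial_lead; first by rewrite /max_entry; lia.
by move: lt_y; rewrite !inE /max_entry; lia.
Qed.

Lemma sorted_coRGC_tails_gray m u k : sorted (differ_segment 3) (coRGC_tails b m u k).
Proof.
elim: k m u => [|k IH] m u //=.
apply: (@sorted_flatten_map _ _ _ [::]) => [x|x|]; first exact/eqP/map_cons_coRGC_tails_neq0.
  by rewrite sorted_map; apply: sub_sorted (IH _ _) => s t /=; rewrite eqxx.
apply: sorted_entries => y lt_y.
case: (odd u) => /=; rewrite last_coRGC_block head_coRGC_block; last exact: coRGC_junction.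
by rewrite differ_segment_sym; exact: coRGC_junction.
Qed.

End Junctions.

Theorem theorem2 (n b : nat) :
  1 <= n -> 2 <= b -> ~~ odd b -> d_adjacent_gray 3 (coRGC_list n b).
Proof.
case: n => [|n] // _ b_ge2 b_even i lt_i.
apply: differ_segment_adjacent.
have : sorted (differ_segment 3) (coRGC_list n.+1 b).
  rewrite coRGC_list_tails sorted_map.
  exact: sub_sorted (sorted_coRGC_tails_gray b_ge2 b_even 0 0 n).
by move/(sortedP [::]); apply.
Qed.
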